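(* Let $\Sigma=\{\sigma,\sigma'\}$. There is a Pavlovian population protocol computing the predicate $[x.\sigma\ge x.\sigma']$. Explicitly: $Q=\{\sigma,\sigma',Y,N\}$, $\iota$ the inclusion, $\omega(\sigma)=\omega(Y)=1$, $\omega(\sigma')=\omega(N)=0$, with rules $NY\to YY$, $YN\to YY$, $N\sigma\to Y\sigma$, $\sigma N\to\sigma Y$, $Y\sigma'\to N\sigma'$, $\sigma'Y\to\sigma'N$, $\sigma\sigma'\to NY$, $\sigma'\sigma\to YN$, and $q_1q_2\to q_1q_2$ for all other pairs; this is the protocol associated to the payoff matrix with rows (player) and columns (opponent) ordered $N,Y,\sigma,\sigma'$: row $N$: $(1,-1,-1,1)$; row $Y$: $(0,1,1,-1)$; row $\sigma$: $(0,0,0,-1)$; row $\sigma'$: $(0,0,-1,0)$.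
   Context: A population protocol is a tuple $(Q,\Sigma,\iota,\omega,\delta)$ where $Q$ is a finite set of states, $\Sigma$ a finite input alphabet, $\iota:\Sigma\to Q$, $\omega:Q\to\{0,1\}$, and $\delta\subseteq Q^4$ the transition relation; we write $q_1q_2\to q_1'q_2'$ for $(q_1,q_2,q_1',q_2')\in\delta$. Computations take place among $n\ge 2$ agents. A configuration is a multiset of $n$ elements of $Q$. An input is a multiset $x$ of $n\ge 2$ elements of $\Sigma$ (equivalently an element of $\mathbb N^{\Sigma}$ with total mass $n$; $x.\sigma$ denotes the multiplicity of $\sigma$ in $x$), and its initial configuration is the multiset $\iota(x)$. We write $C\to C'$ if $C'$ is obtained from $C$ by choosing two of its elements (two distinct agents) in states $q_1,q_2$ and replacing them by $q_1',q_2'$ for some $(q_1,q_2,q_1',q_2')\in\delta$. An execution is an infinite sequence $C_0,C_1,\dots$ with $C_0$ an initial configuration and $C_i\to C_{i+1}$ for all $i$. An execution is fair if for every configuration $C$ occurring infinitely often and every $C'$ with $C\to C'$, $C'$ also occurs infinitely often. A protocol computes a predicate $p:\mathbb N^\Sigma\to\{0,1\}$ if for every input $x$ and every fair execution from $\iota(x)$, there is a time after which every agent's output $\omega(q)$ equals $p(x)$. A symmetric game on $Q$ is a real matrix $M=(M_{q,r})_{q,r\in Q}$ ($M_{q,r}$ = payoff of playing $q$ against $r$). For $q',y\in Q$, $BR_{\neq q'}(y)$ is the set of $x\in Q\setminus\{q'\}$ with $M_{z,y}\le M_{x,y}$ for all $z\in Q\setminus\{q'\}$. The transition relation associated to $M$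 consists of exactly those $(q_1,q_2,q_1',q_2')$ with: $q_1'=q_1$ if $M_{q_1,q_2}\ge0$, $q_1'\in BR_{\neq q_1}(q_2)$ if $M_{q_1,q_2}<0$; $q_2'=q_2$ if $M_{q_2,q_1}\ge0$, $q_2'\in BR_{\neq q_2}(q_1)$ if $M_{q_2,q_1}<0$. A population protocol is Pavlovian if $\delta$ equals the transition relation associated to some real matrix indexed by $Q\times Q$. *)

From Stdlib Require Import Reals.
From HB Require Import structures.
From mathcomp Require Import all_boot.

Set Implicit Arguments.
Unset Strict Implicit.
Unset Printing Implicit Defensive.

Record protocol := Protocol {
  pQ : finType;
  pSigma : finType;
  p_iota : pSigma -> pQ;
  p_omega : pQ -> bool;              (* output map, true = 1, false = 0 *)
  p_delta : pQ -> pQ -> pQ -> pQ -> Prop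
}.

(* A configuration / input is a multiset, represented by its multiplicity
   function. *)
Definition config (Q : finType) := {ffun Q -> nat}.
Definition input (S : finType) := {ffun S -> nat}.

Definition size_ms (T : finType) (m : {ffun T -> nat}) : nat := \sum_(t : T) m t.

Definition init_config (P : protocol) (x : input (pSigma P)) : config (pQ P) :=
  [ffun q => \sum_(s : pSigma P | p_iota s == q) x s].

Definition add2 (Q : finType) (R : config Q) (q1 q2 : Q) : config Q :=
  [ffun q => R q + (q == q1) + (q == q2)].

(* C -> C' : two distinct agents in states q1, q2 (i.e. C = R + {q1,q2})
   are replaced by q1', q2' with (q1,q2,q1',q2') in delta. *)
Definition step (P : protocol) (C C' : config (pQ P)) : Prop :=
  exists (R : config (pQ P)) (q1 q2 q1' q2' : pQ P),
    p_delta q1 q2 q1' q2' /\ C = add2 R q1 q2 /\ C' = add2 R q1' q2'.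
Arguments step : clear implicits.

Definition infinitely_often (Q : finType) (E : nat -> config Q) (C : config Q) :=
  forall N, exists i, N <= i /\ E i = C.

Definition execution (P : protocol) (x : input (pSigma P))
    (E : nat -> config (pQ P)) : Prop :=
  E 0 = init_config x /\ forall i, step P (E i) (E i.+1).

Definition fair (P : protocol) (E : nat -> config (pQ P)) : Prop :=
  forall C, infinitely_often E C ->
    forall C', step P C C' -> infinitely_often E C'.

Definition computes (P : protocol) (p : input (pSigma P) -> bool) : Prop :=
  forall x : input (pSigma P), 2 <= size_ms x ->
    forall E, execution x E -> fair E ->
      exists T, forall t, T <= t ->
        forall q, 0 < E t q -> p_omega q = p x.

Definition BR_neq (Q : Type) (M : Q -> Q -> R) (q' y x : Q) : Prop :=
  x <> q' /\ forall z, z <> q' -> Rle (M z y) (M x y).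

Definition assoc_rel (Q : Type) (M : Q -> Q -> R) (q1 q2 q1' q2' : Q) : Prop :=
  (Rle 0 (M q1 q2) -> q1' = q1) /\
  (Rlt (M q1 q2) 0 -> BR_neq M q1 q2 q1') /\
  (Rle 0 (M q2 q1) -> q2' = q2) /\
  (Rlt (M q2 q1) 0 -> BR_neq M q2 q1 q2').

Definition pavlovian (P : protocol) : Prop :=
  exists M : pQ P -> pQ P -> R,
    forall q1 q2 q1' q2', p_delta q1 q2 q1' q2' <-> assoc_rel M q1 q2 q1' q2'.

Inductive sym := Sig | Sig'.
Inductive st := stN | stY | stS | stS'.

Definition sym_enc (s : sym) : bool := if s is Sig then true else false.
Definition sym_dec (b : bool) : sym := if b then Sig else Sig'.
Lemma sym_encK : cancel sym_enc sym_dec. Proof. by case. Qed.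
HB.instance Definition _ := Finite.copy sym (can_type sym_encK).

Definition st_enc (q : st) : 'I_4 :=
  match q with stN => inord 0 | stY => inord 1 | stS => inord 2 | stS' => inord 3 end.
Definition st_dec (i : 'I_4) : st :=
  match val i with 0 => stN | 1 => stY | 2 => stS | _ => stS' end.
Lemma st_encK : cancel st_enc st_dec.
Proof. by case; rewrite /st_dec /= inordK. Qed.
HB.instance Definition _ := Finite.copy st (can_type st_encK).

Definition iota0 (s : sym) : st := if s is Sig then stS else stS'.
Definition omega0 (q : st) : bool :=
  match q with stS | stY => true | _ => false end.

Definition rule (q1 q2 : st) : st * st :=
  match q1, q2 with
  | stN, stY => (stY, stY)
  | stY, stN => (stY, stY)
  | stN, stS => (stY, stS)
  | stS, stN => (stS, stY)
  | stY, stS' => (stN, stS')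
  | stS', stY => (stS', stN)
  | stS, stS' => (stN, stY)
  | stS', stS => (stY, stN)
  | a, b => (a, b)
  end.

Definition delta0 (q1 q2 q1' q2' : st) : Prop := rule q1 q2 = (q1', q2').

Definition P0 : protocol := @Protocol st sym iota0 omega0 delta0.

(* payoff matrix, rows = player, columns = opponent, order N, Y, sigma, sigma' *)
Definition M0 (q r : st) : R :=
  match q, r with
  | stN, stN => IZR 1 | stN, stY => IZR (-1) | stN, stS => IZR (-1) | stN, stS' => IZR 1
  | stY, stN => IZR 0 | stY, stY => IZR 1 | stY, stS => IZR 1 | stY, stS' => IZR (-1)
  | stS, stN => IZR 0 | stS, stY => IZR 0 | stS, stS => IZR 0 | stS, stS' => IZR (-1)
  | stS', stN => IZR 0 | stS', stY => IZR 0 | stS', stS => IZR (-1) | stS', stS' => IZR 0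
  end.

Definition pred_ge (x : input sym) : bool := x Sig' <= x Sig.

From Stdlib Require Import Reals Lra Lia Classical.
From HB Require Import structures.
From mathcomp Require Import all_boot zify.

Set Implicit Arguments.
Unset Strict Implicit.
Unset Printing Implicit Defensive.

(* The relation associated with a payoff matrix splits into
   one independent condition per agent ("half" relations).  An agent with a
   non-negative payoff keeps its state; an agent with a negative payoff moves
   to a best response, and when that best response is strict the half
   relation is a function.  For M0 every pair is of one of these two kinds
   and the resulting function is exactly the listed rule.

   Along any execution the difference #sigma - #sigma'
   and the presence of a non-N agent are invariant.  Configurations of fixed
   size are finitely many, so some configuration C recurs; from C one can
   explicitly reach a "settled" configuration (only sigma, Y when the
   majority is sigma; only sigma', N otherwise), which by fairness is
   eventually visited.  Settled configurations are closed under steps and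
   all their agents output the correct answer. *)

Definition half_rel (Q : Type) (M : Q -> Q -> R) (q y x : Q) : Prop :=
  (Rle 0 (M q y) -> x = q) /\ (Rlt (M q y) 0 -> BR_neq M q y x).

Lemma assoc_relE (Q : Type) (M : Q -> Q -> R) (q1 q2 q1' q2' : Q) :
  assoc_rel M q1 q2 q1' q2' <-> half_rel M q1 q2 q1' /\ half_rel M q2 q1 q2'.
Proof. by rewrite /assoc_rel /half_rel; tauto. Qed.

Definition strict_BR (Q : Type) (M : Q -> Q -> R) (q y b : Q) : Prop :=
  b <> q /\ forall z, z <> q -> z <> b -> Rlt (M z y) (M b y).

Lemma half_rel_stay (Q : Type) (M : Q -> Q -> R) (q y x : Q) :
  Rle 0 (M q y) -> half_rel M q y x <-> x = q.
Proof.
move=> nonneg; split=> [[/(_ nonneg)] // | ->].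
by split=> // /Rlt_not_le.
Qed.

Lemma half_rel_switch (Q : Type) (M : Q -> Q -> R) (q y b x : Q) :
  Rlt (M q y) 0 -> strict_BR M q y b -> half_rel M q y x <-> x = b.
Proof.
move=> neg [bq best]; split.
- move=> [_ /(_ neg) [xq xbest]]; apply: NNPP => xb.
  by have := best x xq xb; have := xbest b bq; lra.
- move=> ->; split=> [/Rle_not_lt // | _]; split=> // z zq.
  by case: (classic (z = b)) => [-> | zb]; [lra | apply/Rlt_le/best].
Qed.

(* For M0 each agent's reaction is the corresponding component of [rule]:
   every pair has either a non-negative payoff or a strict best response. *)
Lemma half_rel_M0 (q y x : st) : half_rel M0 q y x <-> x = (rule q y).1.
Proof.
case: q; case: y => /=;
  first [ apply: half_rel_stay; rewrite /M0; lra
        | apply: half_rel_switch; rewrite /M0;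
          [lra | split=> [// | [] zq zb //]; lra] ].
Qed.

Lemma rule_swap (q1 q2 : st) : rule q2 q1 = ((rule q1 q2).2, (rule q1 q2).1).
Proof. by case: q1; case: q2. Qed.

Lemma delta0_assoc (q1 q2 q1' q2' : st) :
  delta0 q1 q2 q1' q2' <-> assoc_rel M0 q1 q2 q1' q2'.
Proof.
rewrite assoc_relE !half_rel_M0 (rule_swap q1 q2) /delta0.
by case: (rule q1 q2) => a b /=; split=> [[<- <-] | [-> ->]].
Qed.

Lemma recurrent_value (T : eqType) (f : nat -> T) (s : seq T) :
  (forall N, exists i, N <= i /\ f i \in s) ->
  exists c, forall N, exists i, N <= i /\ f i = c.
Proof.
elim: s => [|c s IH] often; first by have [i [_]] := often 0.
case: (classic (forall N, exists i, N <= i /\ f i = c)) => [c_often | ].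
  by exists c.
move=> /not_all_ex_not [N0 c_rare]; apply: IH => N.
have [i [Ni]] := often (maxn N N0); rewrite in_cons => /orP [/eqP fic | fis].
- by case: c_rare; exists i; split=> //; apply: leq_trans (leq_maxr N N0) Ni.
- by exists i; split=> //; apply: leq_trans (leq_maxl N N0) Ni.
Qed.

Lemma bounded_configs (Q : finType) (n : nat) :
  exists s : seq (config Q), forall C : config Q, (forall q, C q <= n) -> C \in s.
Proof.
exists (map (fun g : {ffun Q -> 'I_n.+1} => [ffun q => val (g q)])
            (enum {ffun Q -> 'I_n.+1})) => C bounded.
apply/mapP; exists [ffun q => inord (C q)]; first by rewrite mem_enum.
by apply/ffunP => q; rewrite !ffunE /= inordK // ltnS.
Qed.

Lemma size_add2 (Q : finType) (C : config Q) (q1 q2 : Q) :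
  size_ms (add2 C q1 q2) = size_ms C + 2.
Proof.
rewrite /size_ms; under eq_bigr do rewrite ffunE.
rewrite !big_split /= -!big_mkcond !big_pred1_eq; lia.
Qed.

Lemma entry_le_size (Q : finType) (C : config Q) (q : Q) : C q <= size_ms C.
Proof. by rewrite /size_ms (bigD1 q) //= leq_addr. Qed.

Section Executions.
Variable P : protocol.

Lemma size_init (x : input (pSigma P)) : size_ms (init_config x) = size_ms x.
Proof.
rewrite /size_ms (partition_big (@p_iota P) predT) //=.
by apply: eq_bigr => q _; rewrite ffunE.
Qed.

Lemma step_size (C C' : config (pQ P)) : step P C C' -> size_ms C' = size_ms C.
Proof. by move=> [R [q1 [q2 [q1' [q2' [_ [-> ->]]]]]]]; rewrite !size_add2. Qed.

Lemma invariant_from (I : config (pQ P) -> Prop) (E : nat -> config (pQ P)) (t0 : nat) :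
  (forall C C', I C -> step P C C' -> I C') -> (forall i, step P (E i) (E i.+1)) ->
  I (E t0) -> forall t, t0 <= t -> I (E t).
Proof.
move=> closed steps start; elim=> [|t IH]; first by rewrite leqn0 => /eqP <-.
rewrite leq_eqVlt => /orP [/eqP <- // | /IH It]; exact: closed It (steps t).
Qed.

(* Every execution visits some configuration infinitely often, since the
   population size is constant and hence only finitely many configurations
   can occur. *)
Lemma recurrent_config (x : input (pSigma P)) (E : nat -> config (pQ P)) :
  execution x E -> exists C, infinitely_often E C.
Proof.
move=> [E0 steps]; have [s in_s] := bounded_configs (pQ P) (size_ms x).
apply: (@recurrent_value _ E s) => N; exists N; split=> //; apply: in_s => q.
suff <- : size_ms (E N) = size_ms x by apply: entry_le_size.
apply: (invariant_from (I := fun C => size_ms C = size_ms x)) (leq0n N) => //.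
- by move=> C C' sizeC /step_size ->.
- by rewrite E0 size_init.
Qed.

Inductive reach : config (pQ P) -> config (pQ P) -> Prop :=
| reach_refl C : reach C C
| reach_step C C' C'' : step P C C' -> reach C' C'' -> reach C C''.

Lemma reach_trans C1 C2 C3 : reach C1 C2 -> reach C2 C3 -> reach C1 C3.
Proof. by elim=> [// | C C' C'' st _ IH] /IH; apply: reach_step st. Qed.

Lemma reach_transfer (F : nat -> nat -> config (pQ P)) :
  (forall i j, step P (F i j.+1) (F i.+1 j)) -> forall k, reach (F 0 k) (F k 0).
Proof.
move=> steps k; elim: k F steps => [|k IH] F steps; first exact: reach_refl.
exact: reach_step (steps 0 k) (IH (fun i j => F i.+1 j) (fun i j => steps i.+1 j)).
Qed.

Lemma fair_reach (E : nat -> config (pQ P)) (C G : config (pQ P)) :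
  fair E -> infinitely_often E C -> reach C G -> infinitely_often E G.
Proof. by move=> fairE + R; elim: R => // C0 C1 C2 st _ IH /fairE /(_ C1 st). Qed.

End Executions.
Arguments reach : clear implicits.

(* Computable equality on states, used to evaluate multiset updates. *)
Definition st_beq (a b : st) : bool :=
  match a, b with
  | stN, stN | stY, stY | stS, stS | stS', stS' => true
  | _, _ => false
  end.

Lemma eq_st (a b : st) : (a == b) = st_beq a b.
Proof. by case: a; case: b => //=; apply/eqP. Qed.

Definition mk (n y s s' : nat) : config st :=
  [ffun q => match q with stN => n | stY => y | stS => s | stS' => s' end].

Lemma mkE (C : config st) : C = mk (C stN) (C stY) (C stS) (C stS').
Proof. by apply/ffunP => -[]; rewrite ffunE. Qed.

Lemma add2_mk n y s s' q1 q2 :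
  add2 (mk n y s s') q1 q2 =
  mk (n + (stN == q1) + (stN == q2)) (y + (stY == q1) + (stY == q2))
     (s + (stS == q1) + (stS == q2)) (s' + (stS' == q1) + (stS' == q2)).
Proof. by apply/ffunP => -[]; rewrite !ffunE. Qed.

Lemma step_rule (R : config st) (q1 q2 : st) :
  step P0 (add2 R q1 q2) (add2 R (rule q1 q2).1 (rule q1 q2).2).
Proof.
exists R, q1, q2, (rule q1 q2).1, (rule q1 q2).2.
by split=> //; exact: surjective_pairing.
Qed.

Lemma step_cases (C C' : config st) : step P0 C C' ->
  exists R q1 q2, C = add2 R q1 q2 /\ C' = add2 R (rule q1 q2).1 (rule q1 q2).2.
Proof.
move=> [R [q1 [q2 [q1' [q2' [rule12 [-> ->]]]]]]].
by exists R, q1, q2; rewrite /delta0 /= in rule12; rewrite rule12.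
Qed.

Lemma step_cancel n y s s' : step P0 (mk n y s.+1 s'.+1) (mk n.+1 y.+1 s s').
Proof.
by have := step_rule (mk n y s s') stS stS';
  rewrite !add2_mk !eq_st /= !addn0 !addn1.
Qed.

Lemma step_S_converts_N n y s s' : step P0 (mk n.+1 y s.+1 s') (mk n y.+1 s.+1 s').
Proof.
by have := step_rule (mk n y s s') stN stS;
  rewrite !add2_mk !eq_st /= !addn0 !addn1.
Qed.

Lemma step_S'_converts_Y n y s s' : step P0 (mk n y.+1 s s'.+1) (mk n.+1 y s s'.+1).
Proof.
by have := step_rule (mk n y s s') stY stS';
  rewrite !add2_mk !eq_st /= !addn0 !addn1.
Qed.

Lemma step_Y_converts_N n y s s' : step P0 (mk n.+1 y.+1 s s') (mk n y.+2 s s').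
Proof.
by have := step_rule (mk n y s s') stN stY;
  rewrite !add2_mk !eq_st /= !addn0 !addn1.
Qed.

Definition balanced (x : input sym) (C : config st) : Prop :=
  C stS + x Sig' = C stS' + x Sig /\ C stY + C stS + C stS' <> 0.

Lemma balanced_step (x : input sym) (C C' : config st) :
  balanced x C -> step P0 C C' -> balanced x C'.
Proof.
move=> + /step_cases [R [q1 [q2 [EC EC']]]].
rewrite {}EC {}EC' /balanced !ffunE !eq_st.
by case: q1; case: q2 => /=; lia.
Qed.

Lemma sum_sym (F : sym -> nat) : \sum_(s : sym) F s = F Sig + F Sig'.
Proof.
rewrite (bigD1 Sig) //= (bigD1 Sig') //= big1 ?addn0 // => -[];
by rewrite eqxx ?andbF.
Qed.

Lemma init_mk (x : input sym) : init_config (P := P0) x = mk 0 0 (x Sig) (x Sig').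
Proof.
apply/ffunP => q; rewrite !ffunE big_mkcond sum_sym.
by case: q; rewrite /= !eq_st /= ?addn0.
Qed.

Lemma balanced_init (x : input sym) :
  0 < size_ms x -> balanced x (init_config (P := P0) x).
Proof. by rewrite init_mk /balanced /size_ms sum_sym !ffunE /=; lia. Qed.

Lemma balanced_pred (x : input sym) (C : config st) :
  balanced x C -> (C stS' <= C stS) = pred_ge x.
Proof. by move=> [diff _]; apply/idP/idP; rewrite /pred_ge; lia. Qed.

Definition settled (b : bool) (C : config st) : Prop :=
  if b then C stS' = 0 /\ C stN = 0 else C stS = 0 /\ C stY = 0.

Lemma settled_step (b : bool) (C C' : config st) :
  settled b C -> step P0 C C' -> settled b C'.
Proof.
move=> + /step_cases [R [q1 [q2 [EC EC']]]].
rewrite {}EC {}EC' /settled !ffunE !eq_st.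
by case: b; case: q1; case: q2 => /=; lia.
Qed.

Lemma settled_output (b : bool) (C : config st) (q : st) :
  settled b C -> 0 < C q -> omega0 q = b.
Proof.
by case: b; case: q => //= -[zero1 zero2]; rewrite ?zero1 ?zero2.
Qed.

(* When sigma is in the (weak) majority, cancel all sigma' against sigma;
   the remaining sigma (or, if none remain, the Y agents) then convert every
   N into Y. *)
Lemma reach_settled_sigma n y e s' : y + (s' + e) + s' <> 0 ->
  exists2 G, reach P0 (mk n y (s' + e) s') G & settled true G.
Proof.
move=> active.
have cancel := @reach_transfer P0 (fun i j => mk (i + n) (i + y) (j + e) j)
                 (fun i j => step_cancel _ _ _ _) s'.
rewrite /= !add0n in cancel.
case: e cancel active => [|e] cancel active.
- have [m ym] : exists m, s' + y = m.+1 by exists (s' + y).-1; lia.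
  have convert := @reach_transfer P0 (fun i j => mk j (i + m).+1 0 0)
                    (fun i j => step_Y_converts_N _ _ _ _) (s' + n).
  rewrite /= -ym in convert.
  by eexists; [exact: reach_trans cancel convert | rewrite /settled !ffunE].
- have convert := @reach_transfer P0 (fun i j => mk j (i + (s' + y)) e.+1 0)
                    (fun i j => step_S_converts_N _ _ _ _) (s' + n).
  rewrite /= add0n in convert.
  by eexists; [exact: reach_trans cancel convert | rewrite /settled !ffunE].
Qed.

(* When sigma' is in the strict majority, cancel all sigma against sigma';
   the remaining sigma' then convert every Y into N. *)
Lemma reach_settled_sigma' n y s f :
  exists2 G, reach P0 (mk n y s (s + f.+1)) G & settled false G.
Proof.
have cancel := @reach_transfer P0 (fun i j => mk (i + n) (i + y) j (j + f.+1))
                 (fun i j => step_cancel _ _ _ _) s.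
rewrite /= !add0n in cancel.
have convert := @reach_transfer P0 (fun i j => mk (i + (s + n)) j 0 f.+1)
                  (fun i j => step_S'_converts_Y _ _ _ _) (s + y).
rewrite /= add0n in convert.
by eexists; [exact: reach_trans cancel convert | rewrite /settled !ffunE].
Qed.

Lemma reach_settled n y s s' : y + s + s' <> 0 ->
  exists2 G, reach P0 (mk n y s s') G & settled (s' <= s) G.
Proof.
move=> active; case: (leqP s' s) => [le_s's | lt_ss'].
- have [e es] : exists e, s = s' + e by exists (s - s'); lia.
  by rewrite {}es in active *; apply: reach_settled_sigma.
- have [f ->] : exists f, s' = s + f.+1 by exists (s' - s).-1; lia.
  exact: reach_settled_sigma'.
Qed.

Theorem computes_ge : computes (P := P0) pred_ge.
Proof.
rewrite /computes /= => x size_x E [E0 steps] fairE.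
have [C recC] := recurrent_config (conj E0 steps).
have [i0 [_ Ei0]] := recC 0.
have balC : balanced x C.
  rewrite -Ei0.
  apply: (@invariant_from P0 _ _ _ (@balanced_step x)) (leq0n i0) => //.
  by rewrite E0; apply: balanced_init; apply: ltnW.
rewrite (mkE C) in recC.
have [G reachG settledG] := reach_settled (C stN) balC.2.
have [t0 [_ Et0]] := fair_reach fairE recC reachG 0.
exists t0 => t le_t0t q pos; apply: settled_output pos.
rewrite -(balanced_pred balC).
by apply: (@invariant_from P0 _ _ _ (@settled_step _)) le_t0t; rewrite // Et0.
Qed.

Theorem mainTheorem6 :
  pavlovian P0 /\
  (forall q1 q2 q1' q2' : st, delta0 q1 q2 q1' q2' <-> assoc_rel M0 q1 q2 q1' q2') /\
  computes (P := P0) pred_ge.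
Proof.
split; [exists M0; exact: delta0_assoc | split; [exact: delta0_assoc | exact: computes_ge]].
Qed.
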